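(* The elements appearing in a product of $\mathbf{PM}_k$ expressed in the fundamental basis form an interval for the $\leq_{\mathrm{M}}$-partial order. More precisely, for any $k$-packed matrices $M_1$ and $M_2$, $\mathbf{F}_{M_1} \cdot \mathbf{F}_{M_2} = \sum_{\mathrm{ov}(M_1, M_2) \leq_{\mathrm{M}} M \leq_{\mathrm{M}} \mathrm{un}(M_1, M_2)} \mathbf{F}_M$.
   Context: Let $k \geq 1$, $A_k := \{0,1,\dots,k\}$. A $k$-packed matrix of size $n$ is an $n\times n$ matrix with entries in $A_k$ with at least one nonzero entry in each row and column. $\mathbf{PM}_k$ has fundamental basis $(\mathbf{F}_M)$ indexed by $k$-packed matrices and product $\mathbf{F}_{M_1}\cdot\mathbf{F}_{M_2} = \sum_{M \in \mathrm{Sh}_c(M_1,M_2)} \mathbf{F}_M$, where, for sizes $n_1, n_2$, $\mathrm{Sh}_c(M_1,M_2)$ is the set of all matrices obtained by shuffling the columns of $M_1$ with an $n_2 \times n_1$ zero block placed below it, with the columns of $M_2$ with an $n_1 \times n_2$ zero block placed above it. $\mathrm{ov}(M_1,M_2) := \begin{pmatrix} M_1 & 0 \\ 0 & M_2\end{pmatrix}$ and $\mathrm{un}(M_1,M_2) := \begin{pmatrix} 0 & M_1 \\ M_2 & 0 \end{pmatrix}$. Define $\to$ on $k$-packed matrices of size $n$: $M_1 \to M_2$ if there is $i \in [n-1]$ such that, with $s$ the number of $0$ ending the $i$th column of $M_1$ and $p$ the number of $0$ starting its $(i+1)$st column, $s + p \geq n$ and $M_2$ is obtained by exchanging columns $i$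 and $i+1$ of $M_1$. $\leq_{\mathrm{M}}$ is the reflexive and transitive closure of $\to$. *)

From Stdlib Require Import Relations.
From mathcomp Require Import all_boot all_order all_algebra.
Set Implicit Arguments. Unset Strict Implicit. Unset Printing Implicit Defensive.

(* Entry (i,j) of an n x n matrix, with nat indices (0 outside range). *)
Definition mget (n : nat) (M : 'M[nat]_n) (i j : nat) : nat :=
  match @insub _ (fun x => x < n) 'I_n i, @insub _ (fun x => x < n) 'I_n j with
  | Some a, Some b => M a b
  | _, _ => 0
  end.

Definition packed (k n : nat) (M : 'M[nat]_n) : bool :=
  [&& [forall i, forall j, M i j <= k],
      [forall i, exists j, M i j != 0] &
      [forall j, exists i, M i j != 0]].

(* ov(M1,M2) = [[M1,0],[0,M2]] *)
Definition ov (n1 n2 : nat) (M1 : 'M[nat]_n1) (M2 : 'M[nat]_n2) : 'M[nat]_(n1 + n2) :=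
  \matrix_(i, j)
    (if (i < n1) && (j < n1) then mget M1 i j
     else if (n1 <= i) && (n1 <= j) then mget M2 (i - n1) (j - n1) else 0).

(* un(M1,M2) = [[0,M1],[M2,0]] : the top-right block is M1 (n1 x n1),
   the bottom-left block is M2 (n2 x n2). *)
Definition un (n1 n2 : nat) (M1 : 'M[nat]_n1) (M2 : 'M[nat]_n2) : 'M[nat]_(n1 + n2) :=
  \matrix_(i, j)
    (if (i < n1) && (n2 <= j) then mget M1 i (j - n2)
     else if (n1 <= i) && (j < n2) then mget M2 (i - n1) j else 0).

(* Column shuffle: S is the set of positions (of size n1) receiving, in order,
   the columns of M1 (padded with n2 zero rows below); the remaining positions
   receive, in order, the columns of M2 (padded with n1 zero rows above). *)
Definition shuffle_mx (n1 n2 : nat) (M1 : 'M[nat]_n1) (M2 : 'M[nat]_n2)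
  (S : {set 'I_(n1 + n2)}) : 'M[nat]_(n1 + n2) :=
  \matrix_(i, j)
    (let r := #|[set l in S | l < j]| in
     if j \in S then (if i < n1 then mget M1 i r else 0)
     else (if n1 <= i then mget M2 (i - n1) (j - r) else 0)).

Definition in_Shc (n1 n2 : nat) (M1 : 'M[nat]_n1) (M2 : 'M[nat]_n2)
  (M : 'M[nat]_(n1 + n2)) : Prop :=
  exists S : {set 'I_(n1 + n2)}, #|S| = n1 /\ shuffle_mx M1 M2 S = M.

Definition colseq (n : nat) (M : 'M[nat]_n) (j : 'I_n) : seq nat :=
  [seq M r j | r <- enum 'I_n].

Definition lead_zeros (s : seq nat) : nat := find (fun x => x != 0) s.
Definition trail_zeros (s : seq nat) : nat := find (fun x => x != 0) (rev s).

Definition mstep (n : nat) (M1 M2 : 'M[nat]_n) : Prop :=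
  exists (i i' : 'I_n), val i' = (val i).+1 /\
    n <= trail_zeros (colseq M1 i) + lead_zeros (colseq M1 i') /\
    M2 = xcol i i' M1.

Definition leM (n : nat) : relation 'M[nat]_n := clos_refl_trans _ (@mstep n).

From Stdlib Require Import Relations.
From mathcomp Require Import all_boot all_order all_algebra.
From mathcomp Require Import perm zify.
Set Implicit Arguments. Unset Strict Implicit. Unset Printing Implicit Defensive.

(* Read a matrix as the word of its columns.  A move exchanges adjacent columns
   c, d exactly when every nonzero entry of c lies strictly above every nonzero
   entry of d.  On nonzero columns this relation is asymmetric, so every move
   increases the number of such pairs standing in the wrong order; hence the
   closure of the moves is antisymmetric on words of nonzero columns.

   Let X (resp. Y) be the word of the columns of M1 padded below (resp. of M2
   padded above): ov = X Y, un = Y X, and every letter of X may be exchanged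
   with every letter of Y.  So any shuffle of X and Y is reached from X Y and
   reaches Y X.  Conversely, moves restrict to moves on the subword of columns
   vanishing below row n1; along ov <= M <= un this subword goes X <= X' <= X,
   so X' = X by antisymmetry, likewise for Y, and M is a shuffle of X and Y. *)

Section AdjacentSwaps.
Variables (T : eqType) (R : rel T).

Definition swap_step (s s' : seq T) : Prop :=
  exists p c d t, [/\ s = p ++ c :: d :: t, R c d & s' = p ++ d :: c :: t].

Definition swap_rt : relation (seq T) := clos_refl_trans _ swap_step.

Lemma swap_step_perm s s' : swap_step s s' -> perm_eq s s'.
Proof.
by case=> p [c [d [t [-> _ ->]]]]; rewrite perm_cat2l (perm_catCA [:: c] [:: d]).
Qed.

Lemma swap_rt_perm s s' : swap_rt s s' -> perm_eq s s'.
Proof.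
elim=> [s1 s2 /swap_step_perm // | s1 | s1 s2 s3 _ p12 _ p23]; first exact: perm_refl.
exact: perm_trans p12 p23.
Qed.

Fixpoint inversions (s : seq T) : nat :=
  if s is x :: s' then count (R^~ x) s' + inversions s' else 0.

Lemma inversions_swap p c d t : R c d -> ~~ R d c ->
  inversions (p ++ d :: c :: t) = (inversions (p ++ c :: d :: t)).+1.
Proof.
move=> Rcd nRdc; elim: p => [|x p IHp] /=; last by rewrite IHp !count_cat /=; lia.
rewrite Rcd (negbTE nRdc) /=; lia.
Qed.

Section Antisymmetry.
Variable P : pred T.
Hypothesis R_asym : {in P &, forall x y, R x y -> ~~ R y x}.

Lemma swap_rt_inversions s s' :
  swap_rt s s' -> all P s -> s = s' \/ inversions s < inversions s'.
Proof.
elim=> [s1 s2 [p [c [d [t [-> Rcd ->]]]]] | s1 | s1 s2 s3 r12 IH12 _ IH23] Ps.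
- move: Ps; rewrite all_cat /= => /andP [_ /and3P [Pc Pd _]].
  by right; rewrite (inversions_swap p t Rcd) ?(R_asym Pc Pd Rcd).
- by left.
- have Ps2 : all P s2 by rewrite -(perm_all _ (swap_rt_perm r12)).
  case: (IH12 Ps) => [->|lt12]; first exact: IH23.
  by right; case: (IH23 Ps2) => [<-|lt23] //; apply: ltn_trans lt23.
Qed.

Lemma swap_rt_antisym s s' : swap_rt s s' -> swap_rt s' s -> all P s -> s = s'.
Proof.
move=> r r' Ps; have Ps' : all P s' by rewrite -(perm_all _ (swap_rt_perm r)).
case: (swap_rt_inversions r Ps) => // lt; case: (swap_rt_inversions r' Ps') => [->//|lt'].
by have := ltn_trans lt lt'; rewrite ltnn.
Qed.

End Antisymmetry.

Lemma swap_rt_filter (a : pred T) s s' :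
  swap_rt s s' -> swap_rt (filter a s) (filter a s').
Proof.
elim=> [s1 s2 [p [c [d [t [-> Rcd ->]]]]] | s1 | s1 s2 s3 _ r12 _ r23].
- rewrite !filter_cat /=; case: (a c) (a d) => [] []; try exact: rt_refl.
  by apply: rt_step; exists (filter a p), c, d, (filter a t).
- exact: rt_refl.
- exact: rt_trans r12 r23.
Qed.

Lemma swap_rt_cons x s s' : swap_rt s s' -> swap_rt (x :: s) (x :: s').
Proof.
elim=> [s1 s2 [p [c [d [t [-> Rcd ->]]]]] | s1 | s1 s2 s3 _ r12 _ r23].
- by apply: rt_step; exists (x :: p), c, d, t.
- exact: rt_refl.
- exact: rt_trans r12 r23.
Qed.

Lemma swap_rt_to_front s z t : all (R^~ z) s -> swap_rt (s ++ z :: t) (z :: s ++ t).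
Proof.
elim: s => [|x s IHs] /=; first by move=> _; apply: rt_refl.
case/andP=> Rxz Rsz; apply: rt_trans (swap_rt_cons x (IHs Rsz)) _.
by apply: rt_step; exists [::], x, z, (s ++ t).
Qed.

Lemma swap_rt_to_back z s t : all (R z) s -> swap_rt (z :: s ++ t) (s ++ z :: t).
Proof.
elim: s => [|x s IHs] /=; first by move=> _; apply: rt_refl.
case/andP=> Rzx Rzs; apply: rt_trans (swap_rt_cons x (IHs Rzs)).
by apply: rt_step; exists [::], z, x, (s ++ t).
Qed.

Lemma swap_rt_partition (a : pred T) s :
  {in filter a s & filter (predC a) s, forall x y, R x y} ->
  swap_rt (filter a s ++ filter (predC a) s) s /\
  swap_rt s (filter (predC a) s ++ filter a s).
Proof.
elim: s => [|z s IHs] Rs; first by split; apply: rt_refl.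
have [r1 r2] : swap_rt (filter a s ++ filter (predC a) s) s /\
               swap_rt s (filter (predC a) s ++ filter a s).
  apply: IHs => x y; rewrite !mem_filter => /andP [ax xs] /andP [ay ys].
  by apply: Rs; rewrite mem_filter ?ax ?ay in_cons ?xs ?ys orbT.
move: Rs; rewrite /=; case az: (a z) => /= Rs.
- split; first exact: swap_rt_cons.
  apply: rt_trans (swap_rt_cons z r2) _; apply: swap_rt_to_back.
  by apply/allP => y yb; apply: Rs; rewrite ?inE ?eqxx.
- split; last exact: swap_rt_cons.
  apply: rt_trans _ (swap_rt_cons z r1); apply: swap_rt_to_front.
  by apply/allP => x xa; apply: Rs; rewrite ?inE ?eqxx.
Qed.

End AdjacentSwaps.

Section ShuffleBy.
Variable T : Type.

Fixpoint shuffle_by (b : bitseq) (s1 s2 : seq T) : seq T :=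
  match b, s1, s2 with
  | true :: b', x :: s1', _ => x :: shuffle_by b' s1' s2
  | false :: b', _, y :: s2' => y :: shuffle_by b' s1 s2'
  | _, _, _ => [::]
  end.

Lemma shuffle_by_filter (a : pred T) s :
  shuffle_by (map a s) (filter a s) (filter (predC a) s) = s.
Proof. by elim: s => //= x s IHs; case: (a x); rewrite /= IHs. Qed.

Lemma size_shuffle_by b s1 s2 :
  count id b = size s1 -> size b = size s1 + size s2 -> size (shuffle_by b s1 s2) = size b.
Proof.
elim: b s1 s2 => [|[] b IHb] s1 s2 /=; first by case: s1 s2 => [|? ?] [|? ?].
- have := count_size id b; case: s1 => [|x s1] /= le_cnt cnt sz; first lia.
  by rewrite IHb //; lia.
- have := count_size id b; case: s2 => [|y s2] /= le_cnt cnt sz; first lia.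
  by rewrite IHb //; lia.
Qed.

Lemma filter_shuffle_by (a : pred T) b s1 s2 :
  all a s1 -> all (predC a) s2 -> count id b = size s1 -> size b = size s1 + size s2 ->
  filter a (shuffle_by b s1 s2) = s1 /\ filter (predC a) (shuffle_by b s1 s2) = s2.
Proof.
elim: b s1 s2 => [|[] b IHb] s1 s2 /=.
- by case: s1 s2 => [|? ?] [|? ?].
- have := count_size id b; case: s1 => [|x s1] /= le_cnt => [|/andP [ax a1] a2 cnt sz]; first lia.
  by have [-> ->] := IHb s1 s2 a1 a2 ltac:(lia) ltac:(lia); rewrite ax.
- have := count_size id b; case: s2 => [|y s2] /= le_cnt => [|a1 /andP [ay a2] cnt sz]; first lia.
  by have [-> ->] := IHb s1 s2 a1 a2 ltac:(lia) ltac:(lia); rewrite (negbTE ay).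
Qed.

Lemma nth_shuffle_by x0 b s1 s2 j :
  count id b = size s1 -> size b = size s1 + size s2 -> j < size b ->
  nth x0 (shuffle_by b s1 s2) j =
    if nth false b j then nth x0 s1 (count id (take j b))
    else nth x0 s2 (j - count id (take j b)).
Proof.
elim: b s1 s2 j => [|[] b IHb] s1 s2 j //=; have := count_size id b.
- case: s1 => [|x s1] /= le_cnt cnt sz; first lia.
  case: j => [|j] //= ltj; rewrite IHb //; try lia.
- case: s2 => [|y s2] /= le_cnt cnt sz; first lia.
  case: j => [|j] //= ltj; rewrite IHb //; try lia.
  case: (nth false b j) => //.
  have le : count id (take j b) <= j.
    by apply: leq_trans (count_size _ _) _; rewrite size_take_min geq_minl.
  by rewrite add0n subSn.
Qed.

End ShuffleBy.

Lemma count_take_lt_nth (b : bitseq) j :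
  j < size b -> nth false b j -> count id (take j b) < count id b.
Proof.
move=> ltj bj; rewrite -[in X in _ < X](cat_take_drop j b) count_cat (drop_nth false ltj) /= bj.
lia.
Qed.

Lemma sub_count_take_lt_nth (b : bitseq) j :
  j < size b -> ~~ nth false b j -> j - count id (take j b) < size b - count id b.
Proof.
move=> ltj bj; rewrite -{2 3}(cat_take_drop j b) count_cat size_cat (drop_nth false ltj) /=.
rewrite (negbTE bj) size_take ltj.
have := count_size id (take j b); have := count_size id (drop j.+1 b); rewrite size_take ltj.
lia.
Qed.

Lemma filter_cat_all (T : eqType) (a : pred T) s1 s2 : all a s1 -> all (predC a) s2 ->
  [/\ filter a (s1 ++ s2) = s1, filter a (s2 ++ s1) = s1,
      filter (predC a) (s1 ++ s2) = s2 & filter (predC a) (s2 ++ s1) = s2].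
Proof.
move=> a1 a2; have /all_filterP f1 := a1; have /all_filterP f2 := a2.
have f3 : filter a s2 = [::].
  by rewrite (@eq_in_filter _ a pred0) ?filter_pred0 // => x /(allP a2) /negbTE.
have f4 : filter (predC a) s1 = [::].
  by rewrite (@eq_in_filter _ _ pred0) ?filter_pred0 // => x /(allP a1) /= ->.
by rewrite !filter_cat f1 f2 f3 f4 !cats0; split.
Qed.

Lemma iota_shift m k : iota m k = [seq m + j | j <- iota 0 k].
Proof. by rewrite -iotaDl addn0. Qed.

Section Columns.
Variable n : nat.
Implicit Types (M : 'M[nat]_n) (c d : seq nat).

Definition cols M : seq (seq nat) := [seq colseq M j | j <- enum 'I_n].

(* The support of [c] lies strictly above the support of [d]. *)
Definition exchangeable c d : bool := n <= trail_zeros c + lead_zeros d.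

Lemma nth_colseq M (i j : 'I_n) : nth 0 (colseq M j) i = M i j.
Proof. by rewrite (nth_map i) ?size_enum_ord // nth_ord_enum. Qed.

Lemma size_cols M : size (cols M) = n.
Proof. by rewrite size_map size_enum_ord. Qed.

Lemma nth_cols M (j : 'I_n) : nth [::] (cols M) j = colseq M j.
Proof. by rewrite (nth_map j) ?size_enum_ord // nth_ord_enum. Qed.

Lemma cols_inj : injective cols.
Proof.
by move=> M M' eqMM'; apply/matrixP => i j; rewrite -!nth_colseq -!nth_cols eqMM'.
Qed.

Lemma mem_take_enum_ord j (l : 'I_n) : (l \in take j (enum 'I_n)) = (l < j).
Proof.
by rewrite -(mem_map val_inj) map_take val_enum_ord take_iota mem_iota leq_min ltn_ord andbT.
Qed.

Lemma mem_drop_enum_ord j (l : 'I_n) : (l \in drop j (enum 'I_n)) = (j <= l).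
Proof.
rewrite -(mem_map val_inj) map_drop val_enum_ord drop_iota mem_iota add0n.
have := ltn_ord l; case: (leqP j l) => /=; lia.
Qed.

Lemma enum_ord_split (i i' : 'I_n) : val i' = i.+1 ->
  enum 'I_n = take i (enum 'I_n) ++ i :: i' :: drop i.+2 (enum 'I_n).
Proof.
move=> Si; have Si' : i.+1 = nat_of_ord i' by [].
rewrite -{1}(cat_take_drop i (enum 'I_n)) (drop_nth i) ?size_enum_ord ?ltn_ord //.
by rewrite Si' (drop_nth i) ?size_enum_ord ?ltn_ord // !nth_ord_enum.
Qed.

Lemma colseq_xcol (i i' j : 'I_n) M : colseq (xcol i i' M) j = colseq M (tperm i i' j).
Proof. by apply: eq_map => r; rewrite /xcol /col_perm mxE. Qed.

Lemma cols_split M (i i' : 'I_n) : val i' = i.+1 ->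
  cols M = take i (cols M) ++ colseq M i :: colseq M i' :: drop i.+2 (cols M).
Proof. by move=> Si; rewrite /cols -map_take -map_drop {1}(enum_ord_split Si) map_cat. Qed.

Lemma cols_xcol M (i i' : 'I_n) : val i' = i.+1 ->
  cols (xcol i i' M) = take i (cols M) ++ colseq M i' :: colseq M i :: drop i.+2 (cols M).
Proof.
move=> /= Si; rewrite /cols -map_take -map_drop {1}(enum_ord_split Si) map_cat /=.
rewrite !colseq_xcol tpermL tpermR; congr (_ ++ _ :: _ :: _); apply/eq_in_map => l.
- rewrite mem_take_enum_ord => ltli.
  by rewrite colseq_xcol tpermD //; apply: contraTneq ltli => <-; lia.
- rewrite mem_drop_enum_ord => leil.
  by rewrite colseq_xcol tpermD //; apply: contraTneq leil => <-; lia.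
Qed.

Lemma mstep_swap_step M M' : mstep M M' -> swap_step exchangeable (cols M) (cols M').
Proof.
case=> i [i' [Si [exch ->]]].
exists (take i (cols M)), (colseq M i), (colseq M i'), (drop i.+2 (cols M)).
by rewrite cols_xcol // -cols_split.
Qed.

Lemma swap_step_mstep M s' : swap_step exchangeable (cols M) s' ->
  exists2 M', mstep M M' & cols M' = s'.
Proof.
case=> p [c [d [t [eqM exch ->]]]].
have sizeM := size_cols M; rewrite eqM size_cat /= in sizeM.
have lti : size p < n by rewrite -sizeM addnS ltnS leq_addr.
have lti' : (size p).+1 < n by rewrite -sizeM !addnS !ltnS leq_addr.
pose i := Ordinal lti; pose i' := Ordinal lti'.
have colsi : colseq M i = c by rewrite -nth_cols eqM nth_cat ltnn subnn.
have colsi' : colseq M i' = d by rewrite -nth_cols eqM nth_cat ltnNge leqnSn subSnn.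
have takei : take i (cols M) = p by rewrite eqM take_size_cat.
have dropi : drop i.+2 (cols M) = t.
  by rewrite eqM (catA p [:: c; d] t) drop_size_cat // size_cat addn2.
exists (xcol i i' M); last by rewrite cols_xcol // takei dropi colsi colsi'.
by exists i, i'; rewrite colsi colsi'.
Qed.

Lemma leM_swap_rt M M' : leM M M' -> swap_rt exchangeable (cols M) (cols M').
Proof.
elim=> [M1 M2 /mstep_swap_step | M1 | M1 M2 M3 _ r12 _ r23]; first exact: rt_step.
- exact: rt_refl.
- exact: rt_trans r12 r23.
Qed.

Lemma swap_rt_leM M M' : swap_rt exchangeable (cols M) (cols M') -> leM M M'.
Proof.
suff: forall s, swap_rt exchangeable (cols M) s -> exists2 M', leM M M' & cols M' = s.
  by move=> /[apply] -[M'' leMM'' /cols_inj <-].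
move=> s; move eqM: (cols M) => s0 /clos_rt_rt1n_iff r.
elim: r M eqM => [s1|s1 s2 s3 r12 _ IH] M0 eqM0.
  by exists M0; [apply: rt_refl | rewrite eqM0].
rewrite -eqM0 in r12; have [M1 leM01 eqM1] := swap_step_mstep r12.
have [M2 leM12 eqM2] := IH M1 eqM1.
by exists M2 => //; apply: rt_trans (rt_step _ _ _ _ leM01) leM12.
Qed.

End Columns.

Lemma lead_zeros_nseq_cat m s : lead_zeros (nseq m 0 ++ s) = m + lead_zeros s.
Proof. by rewrite /lead_zeros find_cat has_nseq andbF size_nseq. Qed.

Lemma trail_zeros_cat_nseq m s : trail_zeros (s ++ nseq m 0) = m + trail_zeros s.
Proof. by rewrite /trail_zeros rev_cat rev_nseq find_cat has_nseq andbF size_nseq. Qed.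

Lemma lead_trail_zeros_lt s :
  has (fun x => x != 0) s -> lead_zeros s + trail_zeros s < size s.
Proof.
move=> nz; rewrite /lead_zeros /trail_zeros; set p := find _ s; set q := find _ (rev s).
have ltp : p < size s by rewrite -has_find.
suff : q <= size (drop p.+1 s) by rewrite size_drop; lia.
rewrite /q -{1}(cat_take_drop p.+1 s) rev_cat find_cat size_rev.
case: ifP => [|_]; first by rewrite has_find size_rev => /ltnW.
by rewrite (take_nth 0 ltp) rev_rcons /= (nth_find 0 nz) addn0.
Qed.

Lemma exchangeable_asym n c d : size c = n -> size d = n ->
  has (fun x => x != 0) c -> has (fun x => x != 0) d ->
  exchangeable n c d -> ~~ exchangeable n d c.
Proof.
move=> szc szd /lead_trail_zeros_lt ltc /lead_trail_zeros_lt ltd.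
rewrite szc in ltc; rewrite szd in ltd; rewrite /exchangeable -ltnNge; lia.
Qed.

Definition indicator n (A : {set 'I_n}) : bitseq := [seq j \in A | j <- enum 'I_n].

Lemma size_indicator n (A : {set 'I_n}) : size (indicator A) = n.
Proof. by rewrite size_map size_enum_ord. Qed.

Lemma nth_indicator n (A : {set 'I_n}) (j : 'I_n) : nth false (indicator A) j = (j \in A).
Proof. by rewrite (nth_map j) ?size_enum_ord // nth_ord_enum. Qed.

Lemma count_indicator n (A : {set 'I_n}) : count id (indicator A) = #|A|.
Proof.
rewrite count_map -size_filter -(card_uniqP (filter_uniq _ (enum_uniq _))).
by apply: eq_card => x; rewrite mem_filter mem_enum andbT.
Qed.

Lemma count_take_indicator n (A : {set 'I_n}) j :
  count id (take j (indicator A)) = #|[set l in A | l < j]|.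
Proof.
have perm_take : perm_eq (take j (enum 'I_n)) [seq l : 'I_n <- enum 'I_n | l < j].
  apply: uniq_perm => [||l]; [exact/take_uniq/enum_uniq | exact/filter_uniq/enum_uniq |].
  by rewrite mem_take_enum_ord mem_filter mem_enum andbT.
rewrite -map_take count_map; move/seq.permP: perm_take => ->.
by rewrite count_filter -count_indicator [in RHS]count_map; apply: eq_count => l; rewrite !inE.
Qed.

Definition mcol n (A : 'M[nat]_n) (j : nat) : seq nat := [seq mget A i j | i <- iota 0 n].

Lemma mgetE n (A : 'M[nat]_n) (i j : 'I_n) : mget A i j = A i j.
Proof. by rewrite /mget !valK. Qed.

Lemma mget_ord n (A : 'M[nat]_n) i (j : 'I_n) (lti : i < n) :
  mget A i j = A (Ordinal lti) j.
Proof. by rewrite -mgetE. Qed.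

Lemma size_mcol n (A : 'M[nat]_n) j : size (mcol A j) = n.
Proof. by rewrite size_map size_iota. Qed.

Lemma nth_mcol n (A : 'M[nat]_n) i j : i < n -> nth 0 (mcol A j) i = mget A i j.
Proof. by move=> lti; rewrite (nth_map 0) ?size_iota // nth_iota. Qed.

Lemma colseq_mcol n (A : 'M[nat]_n) (j : 'I_n) : colseq A j = mcol A j.
Proof. by rewrite /mcol -val_enum_ord -map_comp; apply: eq_map => i /=; rewrite mgetE. Qed.

Lemma cols_mcol n (A : 'M[nat]_n) : cols A = [seq mcol A j | j <- iota 0 n].
Proof. by rewrite -val_enum_ord -map_comp; apply: eq_map => j /=; rewrite colseq_mcol. Qed.

Lemma has_mcol n (A : 'M[nat]_n) (j : 'I_n) :
  (exists i, A i j != 0) -> has (fun x => x != 0) (mcol A j).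
Proof.
case=> i nzij; apply/hasP; exists (A i j) => //.
by rewrite -colseq_mcol; apply: (map_f (fun r => A r j)); rewrite mem_enum.
Qed.

Lemma mcol_cat n1 n2 (A : 'M[nat]_(n1 + n2)) j s1 s2 : size s1 = n1 -> size s2 = n2 ->
  (forall i, i < n1 -> mget A i j = nth 0 s1 i) ->
  (forall i, i < n2 -> mget A (n1 + i) j = nth 0 s2 i) ->
  mcol A j = s1 ++ s2.
Proof.
move=> sz1 sz2 top bot; apply: (eq_from_nth (x0 := 0)) => [|i].
  by rewrite size_mcol size_cat sz1 sz2.
rewrite size_mcol => lti; rewrite nth_mcol // nth_cat sz1.
case: ltnP => [/top //|le1i]; rewrite -bot ?subnKC //; lia.
Qed.

Section ColumnShuffles.
Variables (n1 n2 : nat) (M1 : 'M[nat]_n1) (M2 : 'M[nat]_n2).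
Hypothesis M1_col_nz : forall j : 'I_n1, exists i, M1 i j != 0.
Hypothesis M2_col_nz : forall j : 'I_n2, exists i, M2 i j != 0.
Local Notation n := (n1 + n2).

Definition top_col j := mcol M1 j ++ nseq n2 0.
Definition bot_col j := nseq n1 0 ++ mcol M2 j.
Definition top_cols := [seq top_col j | j <- iota 0 n1].
Definition bot_cols := [seq bot_col j | j <- iota 0 n2].

Definition zero_below (c : seq nat) : bool := all (fun x => x == 0) (drop n1 c).
Definition nonzero_col (c : seq nat) : bool := (size c == n) && has (fun x => x != 0) c.

Lemma zero_below_top_cols : all zero_below top_cols.
Proof.
apply/allP => _ /mapP [j _ ->].
by rewrite /zero_below /top_col drop_size_cat ?size_mcol // all_nseq eqxx orbT.
Qed.

Lemma not_zero_below_bot_cols : all (predC zero_below) bot_cols.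
Proof.
apply/allP => c /mapP [j]; rewrite mem_iota add0n => /andP [_ ltj] ->.
rewrite /= /zero_below /bot_col drop_size_cat ?size_nseq // -has_predC.
exact: (has_mcol (M2_col_nz (Ordinal ltj))).
Qed.

Lemma nonzero_top_cols : all nonzero_col top_cols.
Proof.
apply/allP => c /mapP [j]; rewrite mem_iota add0n => /andP [_ ltj] ->.
rewrite /nonzero_col /top_col size_cat size_mcol size_nseq eqxx has_cat.
by rewrite (has_mcol (M1_col_nz (Ordinal ltj))).
Qed.

Lemma nonzero_bot_cols : all nonzero_col bot_cols.
Proof.
apply/allP => c /mapP [j]; rewrite mem_iota add0n => /andP [_ ltj] ->.
rewrite /nonzero_col /bot_col size_cat size_mcol size_nseq eqxx has_cat.
by rewrite (has_mcol (M2_col_nz (Ordinal ltj))) orbT.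
Qed.

Lemma exchangeable_top_bot : {in top_cols & bot_cols, forall c d, exchangeable n c d}.
Proof.
move=> c d /mapP [i _ ->] /mapP [j _ ->].
by rewrite /exchangeable /top_col /bot_col trail_zeros_cat_nseq lead_zeros_nseq_cat; lia.
Qed.

Lemma mget_ov_top i j : i < n1 -> j < n ->
  mget (ov M1 M2) i j = if j < n1 then mget M1 i j else 0.
Proof.
move=> lti ltj; rewrite (mget_ord _ (Ordinal ltj) (ltn_addr _ lti)) mxE /= lti (leqNgt n1 i) lti.
by case: (j < n1).
Qed.

Lemma mget_ov_bot i j : i < n2 -> j < n ->
  mget (ov M1 M2) (n1 + i) j = if j < n1 then 0 else mget M2 i (j - n1).
Proof.
move=> lti ltj; have lti' : n1 + i < n by rewrite ltn_add2l.
rewrite (mget_ord _ (Ordinal ltj) lti') mxE /= (ltnNge (n1 + i)) leq_addr addKn (leqNgt n1 j).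
by case: (j < n1).
Qed.

Lemma mget_un_top i j : i < n1 -> j < n ->
  mget (un M1 M2) i j = if n2 <= j then mget M1 i (j - n2) else 0.
Proof.
move=> lti ltj; rewrite (mget_ord _ (Ordinal ltj) (ltn_addr _ lti)) mxE /= lti (leqNgt n1 i) lti.
by case: (n2 <= j).
Qed.

Lemma mget_un_bot i j : i < n2 -> j < n ->
  mget (un M1 M2) (n1 + i) j = if n2 <= j then 0 else mget M2 i j.
Proof.
move=> lti ltj; have lti' : n1 + i < n by rewrite ltn_add2l.
rewrite (mget_ord _ (Ordinal ltj) lti') mxE /= (ltnNge (n1 + i)) leq_addr addKn (leqNgt n2 j).
by case: (j < n2).
Qed.

Local Notation rk S j := #|[set l in S | l < j]|.

Lemma mget_shuffle_top S i (j : 'I_n) : i < n1 ->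
  mget (shuffle_mx M1 M2 S) i j = if j \in S then mget M1 i (rk S j) else 0.
Proof.
by move=> lti; rewrite (mget_ord _ _ (ltn_addr _ lti)) mxE /= lti (leqNgt n1 i) lti.
Qed.

Lemma mget_shuffle_bot S i (j : 'I_n) : i < n2 ->
  mget (shuffle_mx M1 M2 S) (n1 + i) j = if j \in S then 0 else mget M2 i (j - rk S j).
Proof.
move=> lti; have lti' : n1 + i < n by rewrite ltn_add2l.
by rewrite (mget_ord _ _ lti') mxE /= (ltnNge (n1 + i)) leq_addr addKn.
Qed.

Lemma mcol_shuffle S (j : 'I_n) :
  mcol (shuffle_mx M1 M2 S) j = if j \in S then top_col (rk S j) else bot_col (j - rk S j).
Proof.
case: ifP => jS; apply: mcol_cat; rewrite ?size_mcol ?size_nseq // => i lti.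
- by rewrite mget_shuffle_top ?jS ?nth_mcol.
- by rewrite mget_shuffle_bot ?jS ?nth_nseq ?lti.
- by rewrite mget_shuffle_top ?jS ?nth_nseq ?lti.
- by rewrite mget_shuffle_bot ?jS ?nth_mcol.
Qed.

Lemma mcol_ov j : j < n -> mcol (ov M1 M2) j = if j < n1 then top_col j else bot_col (j - n1).
Proof.
move=> ltj; case: ifP => ltj1; apply: mcol_cat; rewrite ?size_mcol ?size_nseq // => i lti.
- by rewrite mget_ov_top ?ltj1 ?nth_mcol.
- by rewrite mget_ov_bot ?ltj1 ?nth_nseq ?lti.
- by rewrite mget_ov_top ?ltj1 ?nth_nseq ?lti.
- by rewrite mget_ov_bot ?ltj1 ?nth_mcol.
Qed.

Lemma mcol_un j : j < n -> mcol (un M1 M2) j = if n2 <= j then top_col (j - n2) else bot_col j.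
Proof.
move=> ltj; case: ifP => lej2; apply: mcol_cat; rewrite ?size_mcol ?size_nseq // => i lti.
- by rewrite mget_un_top ?lej2 ?nth_mcol.
- by rewrite mget_un_bot ?lej2 ?nth_nseq ?lti.
- by rewrite mget_un_top ?lej2 ?nth_nseq ?lti.
- by rewrite mget_un_bot ?lej2 ?nth_mcol.
Qed.

Lemma cols_ov : cols (ov M1 M2) = top_cols ++ bot_cols.
Proof.
rewrite /top_cols /bot_cols cols_mcol iotaD map_cat add0n (iota_shift n1) -map_comp.
congr (_ ++ _); apply/eq_in_map => j; rewrite mem_iota add0n => /andP [_ ltj] /=.
- by rewrite mcol_ov ?ltj // ltn_addr.
- by rewrite mcol_ov ?ltn_add2l // (ltnNge (n1 + j)) leq_addr addKn.
Qed.

Lemma cols_un : cols (un M1 M2) = bot_cols ++ top_cols.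
Proof.
rewrite /top_cols /bot_cols cols_mcol [in iota 0 _]addnC iotaD map_cat add0n (iota_shift n2).
rewrite -map_comp; congr (_ ++ _); apply/eq_in_map => j; rewrite mem_iota add0n => /andP [_ ltj] /=.
- by rewrite mcol_un ?(leqNgt n2 j) ?ltj // ltn_addl.
- by rewrite mcol_un ?leq_addr ?addKn // (addnC n1) ltn_add2l.
Qed.

Lemma indicator_sizes (S : {set 'I_n}) : #|S| = n1 ->
  count id (indicator S) = size top_cols /\ size (indicator S) = size top_cols + size bot_cols.
Proof. by rewrite count_indicator size_indicator !size_map !size_iota. Qed.

Lemma cols_shuffle_mx (S : {set 'I_n}) : #|S| = n1 ->
  cols (shuffle_mx M1 M2 S) = shuffle_by (indicator S) top_cols bot_cols.
Proof.
move=> /indicator_sizes [cnt sz]; apply: (eq_from_nth (x0 := [::])) => [|j].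
  by rewrite size_cols (size_shuffle_by cnt sz) size_indicator.
rewrite size_cols => ltj; have ltjS : j < size (indicator S) by rewrite size_indicator.
rewrite (nth_shuffle_by _ cnt sz ltjS).
have := sub_count_take_lt_nth ltjS; have := count_take_lt_nth ltjS.
rewrite cnt sz addKn !size_map !size_iota -[j]/(nat_of_ord (Ordinal ltj)).
rewrite nth_indicator count_take_indicator nth_cols colseq_mcol mcol_shuffle.
move=> lt_top lt_bot; case: ifP => jS.
- by rewrite (nth_map 0) ?size_iota ?lt_top // nth_iota ?lt_top.
- by rewrite (nth_map 0) ?size_iota ?lt_bot ?jS // nth_iota ?lt_bot ?jS.
Qed.

Lemma filters_shuffle_mx (S : {set 'I_n}) : #|S| = n1 ->
  filter zero_below (cols (shuffle_mx M1 M2 S)) = top_cols /\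
  filter (predC zero_below) (cols (shuffle_mx M1 M2 S)) = bot_cols.
Proof.
move=> cardS; have [cnt sz] := indicator_sizes cardS; rewrite cols_shuffle_mx //.
exact: filter_shuffle_by zero_below_top_cols not_zero_below_bot_cols cnt sz.
Qed.

Lemma shuffle_mx_between (S : {set 'I_n}) : #|S| = n1 ->
  leM (ov M1 M2) (shuffle_mx M1 M2 S) /\ leM (shuffle_mx M1 M2 S) (un M1 M2).
Proof.
move=> /filters_shuffle_mx [top bot].
have [ov_le le_un] := swap_rt_partition (R := exchangeable n) (a := zero_below)
  (s := cols (shuffle_mx M1 M2 S)) (ltac:(rewrite top bot; exact: exchangeable_top_bot)).
rewrite top bot -cols_ov -cols_un in ov_le le_un.
by split; apply: swap_rt_leM.
Qed.

Lemma filters_in_Shc (M : 'M[nat]_n) :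
  filter zero_below (cols M) = top_cols -> filter (predC zero_below) (cols M) = bot_cols ->
  in_Shc M1 M2 M.
Proof.
move=> top bot; pose S := [set j | zero_below (colseq M j)].
have indS : indicator S = map zero_below (cols M).
  by rewrite -map_comp; apply: eq_map => j; rewrite /= inE.
have cardS : #|S| = n1.
  by rewrite -count_indicator indS count_map -size_filter top size_map size_iota.
exists S; split => //; apply: cols_inj.
by rewrite cols_shuffle_mx // indS -top -bot shuffle_by_filter.
Qed.

Lemma between_in_Shc (M : 'M[nat]_n) :
  leM (ov M1 M2) M -> leM M (un M1 M2) -> in_Shc M1 M2 M.
Proof.
move=> /leM_swap_rt ov_le /leM_swap_rt le_un; rewrite cols_ov in ov_le; rewrite cols_un in le_un.
have asym : {in nonzero_col &, forall c d, exchangeable n c d -> ~~ exchangeable n d c}.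
  by move=> c d /andP [/eqP szc nzc] /andP [/eqP szd nzd]; apply: exchangeable_asym.
have [top_l top_r bot_l bot_r] := filter_cat_all zero_below_top_cols not_zero_below_bot_cols.
apply: filters_in_Shc; apply/esym/(swap_rt_antisym asym).
- by rewrite -top_l; apply: swap_rt_filter.
- by rewrite -top_r; apply: swap_rt_filter.
- exact: nonzero_top_cols.
- by rewrite -bot_l; apply: swap_rt_filter.
- by rewrite -bot_r; apply: swap_rt_filter.
- exact: nonzero_bot_cols.
Qed.

End ColumnShuffles.

Unset Implicit Arguments.
Theorem proposition2p2 (k n1 n2 : nat) (M1 : 'M[nat]_n1) (M2 : 'M[nat]_n2) :
  0 < k -> packed k M1 -> packed k M2 ->
  forall M : 'M[nat]_(n1 + n2),
    in_Shc M1 M2 M <-> (leM (ov M1 M2) M /\ leM M (un M1 M2)).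
Proof.
move=> _ /and3P [_ _ /forallP nz1] /and3P [_ _ /forallP nz2] M.
have col1_nz (j : 'I_n1) : exists i, M1 i j != 0 by apply/existsP.
have col2_nz (j : 'I_n2) : exists i, M2 i j != 0 by apply/existsP.
split=> [[S [cardS <-]] | [ov_le le_un]]; first by apply: shuffle_mx_between.
exact: between_in_Shc col1_nz col2_nz M ov_le le_un.
Qed.
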